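(* Let Problem A be \[ \min_{d,\{t_n\},\{E_n\}}\ \sum_{n=1}^N E_n\left(1+\frac{h_n}{g_n}\right)+\frac{\kappa L^3(D-d)^3}{T^2} \] subject to \[ d\le \sum_{n=1}^N t_nW\ln\left(1+\frac{E_nh_n}{t_n\sigma^2W}\right),\qquad 2\sum_{n=1}^N t_n\le T-\frac{Ld}{f_B},\qquad 0\le d\le D,\quad E_n\ge0,\ t_n\ge0\ \ \forall n. \] Let Problem B be \[ \min_{d,t,\{P_n\},\{w_n\}}\ \sum_{n=1}^N P_nt\left(1+\frac{h_n}{g_n}\right)+\frac{\kappa L^3(D-d)^3}{T^2} \] subject to \[ d\le \sum_{n=1}^N tw_n\ln\left(1+\frac{P_nh_n}{\sigma^2w_n}\right),\qquad 2t\le T-\frac{Ld}{f_B},\qquad \sum_{n=1}^N w_n\le W, \] \[ 0\le d\le D,\quad t\ge0,\quad P_n\ge0,\ w_n\ge 0\ \ \forall n. \] Then Problem A and Problem B are mathematically equivalent. In particular, both can be reformulated as the same optimization problem: \[ \min_{d,\{r_n\},\{E_n\}}\ \sum_{n=1}^N E_n\left(1+\frac{h_n}{g_n}\right)+\frac{\kappa L^3(D-d)^3}{T^2} \] subject to \[ d=\sum_{n=1}^N r_n\ln\left(1+\frac{E_nh_n}{\sigma^2 r_n}\right),\qquad 2\sum_{n=1}^N r_n=W\left(T-\frac{Ld}{f_B}\right),\qquad 0\le d\le D,\ E_n,r_n\ge 0. \] For Problem A this reformulation uses $r_n=t_nW$; for Problem B it uses $E_n=P_nt$ and $r_n=w_nt$.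 Consequently, the two problems have the same minimal objective value.
   Context: All parameters $N, h_n, g_n, W, \sigma^2, \kappa, L, D, T, f_B$ are given positive constants, and $n$ ranges over $\{1,\dots,N\}$. Terms of the form $x\ln(1+y/x)$ are interpreted as $0$ when $x=0$. *)

From HB Require Import structures.
From mathcomp Require Import all_boot all_order all_algebra.
From mathcomp Require Import reals exp.
Set Implicit Arguments. Unset Strict Implicit. Unset Printing Implicit Defensive.
Import Order.TTheory GRing.Theory Num.Theory.
Local Open Scope ring_scope.

Section Problems.
Variables (R : realType) (N : nat) (h g : 'I_N -> R)
          (W sigma kappa L D T fB : R).

Definition comp_cost (d : R) : R := kappa * L ^+ 3 * (D - d) ^+ 3 / T ^+ 2.

Definition objA (d : R) (t E : 'I_N -> R) : R :=
  \sum_(n < N) E n * (1 + h n / g n) + comp_cost d.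

Definition rateA (t E : 'I_N -> R) (n : 'I_N) : R :=
  if t n == 0 then 0
  else t n * W * ln (1 + E n * h n / (t n * sigma ^+ 2 * W)).

Definition feasA (d : R) (t E : 'I_N -> R) : Prop :=
  [/\ d <= \sum_(n < N) rateA t E n,
      2 * \sum_(n < N) t n <= T - L * d / fB,
      0 <= d <= D &
      forall n, 0 <= E n /\ 0 <= t n].

Definition objB (d t : R) (P w : 'I_N -> R) : R :=
  \sum_(n < N) P n * t * (1 + h n / g n) + comp_cost d.

Definition rateB (t : R) (P w : 'I_N -> R) (n : 'I_N) : R :=
  if w n == 0 then 0
  else t * w n * ln (1 + P n * h n / (sigma ^+ 2 * w n)).

Definition feasB (d t : R) (P w : 'I_N -> R) : Prop :=
  [/\ d <= \sum_(n < N) rateB t P w n,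
      2 * t <= T - L * d / fB,
      \sum_(n < N) w n <= W,
      0 <= d <= D &
      0 <= t /\ forall n, 0 <= P n /\ 0 <= w n].

Definition objC (d : R) (r E : 'I_N -> R) : R :=
  \sum_(n < N) E n * (1 + h n / g n) + comp_cost d.

Definition rateC (r E : 'I_N -> R) (n : 'I_N) : R :=
  if r n == 0 then 0
  else r n * ln (1 + E n * h n / (sigma ^+ 2 * r n)).

Definition feasC (d : R) (r E : 'I_N -> R) : Prop :=
  [/\ d = \sum_(n < N) rateC r E n,
      2 * \sum_(n < N) r n = W * (T - L * d / fB),
      0 <= d <= D &
      forall n, 0 <= E n /\ 0 <= r n].

End Problems.

From mathcomp Require Import all_boot all_order all_algebra.
From mathcomp Require Import reals sequences exp convex interval_inference.
From mathcomp Require Import ring.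
Set Implicit Arguments. Unset Strict Implicit. Unset Printing Implicit Defensive.
Import Order.TTheory GRing.Theory Num.Theory.
Local Open Scope ring_scope.

(* Each rate term is the perspective [capacity w x = w ln (1 + x / w)] of
   [ln (1 + x)], with [w = t_n W], [w_n t] or [r_n] and [x = E_n h_n / sigma^2]
   (where [E_n = P_n t] in Problem B).  After this change of variables, A and B
   are relaxations of C in which the rate and time constraints are inequalities,
   and C -> A, C -> B are the reverse substitutions.  A relaxed point is
   tightened at no extra cost: the unused time budget goes to one user, which
   does not lower its rate because the perspective of the concave function
   [ln (1 + x)] is nondecreasing in [w]; then every rate is scaled down so that
   they sum to [d], which only lowers the energies ([capacity w] is inverted
   through [expR]). *)

Section Capacity.
Variable R : realType.
Implicit Types w x y : R.

Definition capacity w x : R := if w == 0 then 0 else w * ln (1 + x / w).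

Lemma capacity0 x : capacity 0 x = 0.
Proof. by rewrite /capacity eqxx. Qed.

(* [capacity_inv 0 y = 0], since [y / 0 = 0]. *)
Definition capacity_inv w y : R := w * (expR (y / w) - 1).

Lemma capacity_ge0 w x : 0 <= w -> 0 <= x -> 0 <= capacity w x.
Proof.
rewrite /capacity; case: eqP => // /eqP w_neq0 w_ge0 x_ge0.
by rewrite mulr_ge0 // ln_ge0 // lerDl divr_ge0.
Qed.

Lemma le_capacityw w w' x : 0 <= w -> w <= w' -> 0 <= x ->
  capacity w x <= capacity w' x.
Proof.
move=> w_ge0 le_ww' x_ge0; move: w_ge0 le_ww'; rewrite le_eqVlt.
case/predU1P=> [<- w'_ge0|w_gt0 le_ww']; first by rewrite capacity0 capacity_ge0.
have w'_gt0 : 0 < w' by exact: lt_le_trans w_gt0 le_ww'.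
rewrite /capacity !gt_eqF //.
pose l := w / w'.
have l_ge0 : 0 <= l by rewrite divr_ge0 // ltW.
have l_le1 : l <= 1 by rewrite ler_pdivrMr // mul1r.
have pos : 0 < 1 + x / w by rewrite ltr_wpDr // divr_ge0 // ltW.
have := @concave_ln R (Itv01 l_ge0 l_le1) _ _ pos ltr01.
rewrite !convRE /= ln1 mulr0 addr0.
have -> : l * (1 + x / w) + (1 - l) * 1 = 1 + x / w'.
  by rewrite /l; field; rewrite !gt_eqF.
have -> : w * ln (1 + x / w) = w' * (l * ln (1 + x / w)).
  by rewrite /l mulrA mulrCA divff ?gt_eqF // mulr1.
by move=> le_ln; rewrite ler_wpM2l // ltW.
Qed.

Lemma capacity_invK w y : 0 < w -> capacity w (capacity_inv w y) = y.
Proof.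
move=> w_gt0; rewrite /capacity /capacity_inv gt_eqF //.
rewrite [X in 1 + X]mulrC mulKf ?gt_eqF //.
by rewrite addrC subrK expRK mulrCA divff ?gt_eqF // mulr1.
Qed.

Lemma capacity_inv_ge0 w y : 0 <= w -> 0 <= y -> 0 <= capacity_inv w y.
Proof.
move=> w_ge0 y_ge0; rewrite mulr_ge0 // subr_ge0 -expR0 ler_expR.
by rewrite divr_ge0.
Qed.

Lemma capacity_inv_le w x y : 0 <= w -> 0 <= x -> y <= capacity w x ->
  capacity_inv w y <= x.
Proof.
move=> w_ge0 x_ge0; have [->|w_neq0] := eqVneq w 0.
  by rewrite /capacity_inv mul0r.
have w_gt0 : 0 < w by rewrite lt_neqAle eq_sym w_neq0.
rewrite /capacity /capacity_inv (negbTE w_neq0) -ler_pdivrMl // => le_y.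
have pos : 0 < 1 + x / w by rewrite ltr_wpDr // divr_ge0 // ltW.
rewrite -ler_pdivlMl // lerBlDl [w^-1 * x]mulrC -[X in _ <= X]lnK ?posrE //.
by rewrite ler_expR [y / w]mulrC.
Qed.

End Capacity.

Section FiniteFamilies.
Variables (R : realFieldType) (I : finType).

Lemma pad_to_sum (i0 : I) (r0 : I -> R) (B : R) : \sum_i r0 i <= B ->
  exists2 r : I -> R, forall i, r0 i <= r i & \sum_i r i = B.
Proof.
move=> le_sumB; pose slack := B - \sum_i r0 i.
exists (fun i => r0 i + (if i == i0 then slack else 0)).
  by move=> i; rewrite lerDl; case: eqP; rewrite // subr_ge0.
by rewrite big_split /= -big_mkcond big_pred1_eq addrC subrK.
Qed.

Lemma shrink_to_sum (rho : I -> R) (d : R) : (forall i, 0 <= rho i) ->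
  0 <= d <= \sum_i rho i ->
  exists2 tau : I -> R, forall i, 0 <= tau i <= rho i & \sum_i tau i = d.
Proof.
move=> rho_ge0 /andP[d_ge0 le_dS]; set S := \sum_i rho i in le_dS.
have S_ge0 : 0 <= S := le_trans d_ge0 le_dS.
have ratio_le1 : d / S <= 1.
  have [S0|S_neq0] := eqVneq S 0; first by rewrite S0 invr0 mulr0.
  by rewrite ler_pdivrMr ?mul1r // lt_neqAle eq_sym S_neq0 S_ge0.
exists (fun i => d / S * rho i).
  by move=> i; rewrite mulr_ge0 ?divr_ge0 //= ler_piMl ?divr_ge0.
rewrite -mulr_sumr -/S; have [S0|S_neq0] := eqVneq S 0; last by rewrite mulfVK.
by apply/eqP; rewrite S0 mulr0 eq_le d_ge0 -S0 le_dS.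
Qed.

End FiniteFamilies.

Lemma capacity_tighten (R : realType) (I : finType) (i0 : I) (r0 x0 : I -> R)
    (B d : R) :
  (forall i, 0 <= r0 i) -> (forall i, 0 <= x0 i) -> \sum_i r0 i <= B ->
  0 <= d <= \sum_i capacity (r0 i) (x0 i) ->
  exists r x, [/\ \sum_i r i = B, \sum_i capacity (r i) (x i) = d,
    forall i, 0 <= r i & forall i, 0 <= x i <= x0 i].
Proof.
move=> r0_ge0 x0_ge0 /(pad_to_sum i0)[r le_r0r sum_r] /andP[d_ge0 le_d].
have r_ge0 i : 0 <= r i := le_trans (r0_ge0 i) (le_r0r i).
pose rho i := capacity (r i) (x0 i).
have rho_ge0 i : 0 <= rho i by exact: capacity_ge0.
have : 0 <= d <= \sum_i rho i.
  rewrite d_ge0 (le_trans le_d) //; apply: ler_sum => i _.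
  exact: le_capacityw.
case/shrink_to_sum=> // tau tau_bnd sum_tau.
exists r, (fun i => capacity_inv (r i) (tau i)); split=> // [|i].
- rewrite -sum_tau; apply: eq_bigr => i _.
  have /andP[tau_ge0 tau_le] := tau_bnd i.
  have [ri0|ri_neq0] := eqVneq (r i) 0; last first.
    by rewrite capacity_invK // lt_neqAle eq_sym ri_neq0 r_ge0.
  by apply/le_anti; rewrite ri0 capacity0 tau_ge0 -(capacity0 (x0 i)) -ri0.
- have /andP[tau_ge0 tau_le] := tau_bnd i.
  by rewrite capacity_inv_ge0 // capacity_inv_le.
Qed.

Section Problems.
Variables (R : realType) (N : nat) (h g : 'I_N -> R).
Variables (W sigma kappa L D T fB : R).
Hypotheses (h_gt0 : forall n, 0 < h n) (g_gt0 : forall n, 0 < g n).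
Hypotheses (W_gt0 : 0 < W) (sigma_gt0 : 0 < sigma).

Let sigma2_gt0 : 0 < sigma ^+ 2. Proof. exact: exprn_gt0. Qed.

Lemma rateC_capacity r E n :
  rateC h sigma r E n = capacity (r n) (E n * h n / sigma ^+ 2).
Proof.
rewrite /rateC /capacity; case: eqP => // /eqP r_neq0.
by congr (_ * ln (1 + _)); field; rewrite r_neq0 gt_eqF.
Qed.

Lemma rateA_capacity t E n :
  rateA h W sigma t E n = capacity (t n * W) (E n * h n / sigma ^+ 2).
Proof.
rewrite /rateA /capacity mulf_eq0 (gt_eqF W_gt0) orbF.
case: eqP => // /eqP t_neq0.
by congr (_ * ln (1 + _)); field; rewrite t_neq0 !gt_eqF.
Qed.

Lemma rateB_capacity t P w n :
  rateB h sigma t P w n = capacity (w n * t) (P n * t * h n / sigma ^+ 2).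
Proof.
rewrite /rateB /capacity mulf_eq0; case: eqP => //= /eqP w_neq0.
have [->|t_neq0] := eqVneq t 0; first by rewrite !mul0r.
by rewrite (mulrC t); congr (_ * ln (1 + _)); field;
  rewrite w_neq0 t_neq0 gt_eqF.
Qed.

Lemma ler_energy (E E' : 'I_N -> R) : (forall n, E n <= E' n) ->
  \sum_(n < N) E n * (1 + h n / g n) <= \sum_(n < N) E' n * (1 + h n / g n).
Proof.
move=> le_EE'; apply: ler_sum => n _; rewrite ler_wpM2r // addr_ge0 //.
by rewrite divr_ge0 // ltW.
Qed.

Lemma feasC_of_relaxed (i0 : 'I_N) d r0 E0 : 0 <= d <= D ->
  d <= \sum_(n < N) rateC h sigma r0 E0 n ->
  2 * \sum_(n < N) r0 n <= W * (T - L * d / fB) ->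
  (forall n, 0 <= E0 n /\ 0 <= r0 n) ->
  exists r E, feasC h W sigma L D T fB d r E /\ forall n, E n <= E0 n.
Proof.
move=> d_bnd le_d le_budget E0r0_ge0.
rewrite (eq_bigr _ (fun n _ => rateC_capacity r0 E0 n)) in le_d.
have r0_ge0 n : 0 <= r0 n by case: (E0r0_ge0 n).
have x0_ge0 n : 0 <= E0 n * h n / sigma ^+ 2.
  by case: (E0r0_ge0 n) => E0_ge0 _; rewrite divr_ge0 ?mulr_ge0 // ltW.
have [|| r [x [sum_r sum_cap r_ge0 x_bnd]]] :=
  @capacity_tighten R _ i0 r0 _ (W * (T - L * d / fB) / 2) d r0_ge0 x0_ge0.
- by rewrite ler_pdivlMr // mulrC.
- by case/andP: d_bnd => d_ge0 _; rewrite d_ge0.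
exists r, (fun n => x n * sigma ^+ 2 / h n); split; first split=> //.
- rewrite -sum_cap; apply: eq_bigr => n _; rewrite rateC_capacity.
  by congr capacity; field; rewrite !gt_eqF.
- by rewrite sum_r mulrC divfK ?pnatr_eq0.
- by move=> n; have /andP[x_ge0 _] := x_bnd n; rewrite divr_ge0 ?mulr_ge0 // ltW.
- move=> n; have /andP[_ le_x] := x_bnd n.
  by rewrite ler_pdivrMr // -ler_pdivlMr.
Qed.

Lemma feasC_of_feasA (i0 : 'I_N) d t E : feasA h W sigma L D T fB d t E ->
  exists r E', feasC h W sigma L D T fB d r E' /\
    objC h g kappa L D T d r E' <= objA h g kappa L D T d t E.
Proof.
case=> le_d le_time d_bnd Et_ge0.
have [||| r [E' [feas le_E]]] :=
  @feasC_of_relaxed i0 d (fun n => t n * W) E d_bnd.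
- apply: (le_trans le_d); apply: ler_sum => n _.
  by rewrite rateA_capacity rateC_capacity.
- by rewrite -mulr_suml mulrA mulrC ler_wpM2l // ltW.
- by move=> n; case: (Et_ge0 n) => E_ge0 t_ge0; rewrite E_ge0 mulr_ge0 // ltW.
by exists r, E'; split=> //; rewrite lerD2r ler_energy.
Qed.

Lemma feasC_of_feasB (i0 : 'I_N) d t P w : feasB h W sigma L D T fB d t P w ->
  exists r E, feasC h W sigma L D T fB d r E /\
    objC h g kappa L D T d r E <= objB h g kappa L D T d t P w.
Proof.
case=> le_d le_time le_bandwidth d_bnd [t_ge0 Pw_ge0].
have [||| r [E [feas le_E]]] :=
  @feasC_of_relaxed i0 d (fun n => w n * t) (fun n => P n * t) d_bnd.
- apply: (le_trans le_d); apply: ler_sum => n _.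
  by rewrite rateB_capacity rateC_capacity.
- rewrite -mulr_suml mulrCA (le_trans _ (ler_wpM2l (ltW W_gt0) le_time)) //.
  by rewrite ler_wpM2r // mulr_ge0.
- by move=> n; case: (Pw_ge0 n) => P_ge0 w_ge0; rewrite !mulr_ge0.
by exists r, E; split=> //; rewrite lerD2r ler_energy.
Qed.

Lemma feasA_of_feasC d r E : feasC h W sigma L D T fB d r E ->
  feasA h W sigma L D T fB d (fun n => r n / W) E.
Proof.
case=> d_eq time_eq d_bnd Er_ge0; split=> //.
- rewrite d_eq; apply: ler_sum => n _.
  by rewrite rateA_capacity rateC_capacity divfK ?gt_eqF.
- by rewrite -mulr_suml mulrA time_eq mulrC mulKf ?gt_eqF.
- by move=> n; case: (Er_ge0 n) => E_ge0 r_ge0; rewrite E_ge0 divr_ge0 // ltW.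
Qed.

Lemma feasB_of_feasC d r E : feasC h W sigma L D T fB d r E ->
  exists t P w, feasB h W sigma L D T fB d t P w /\
    objB h g kappa L D T d t P w <= objC h g kappa L D T d r E.
Proof.
case=> d_eq time_eq d_bnd Er_ge0.
have r_ge0 n : 0 <= r n by case: (Er_ge0 n).
have E_ge0 n : 0 <= E n by case: (Er_ge0 n).
pose tau := (T - L * d / fB) / 2.
have time_tau : 2 * tau = T - L * d / fB by rewrite mulrC divfK ?pnatr_eq0.
have sum_r : \sum_n r n = W * tau.
  by apply: (@mulfI _ 2); rewrite ?pnatr_eq0 // time_eq -time_tau mulrCA.
have tau_ge0 : 0 <= tau by rewrite -(pmulr_rge0 _ W_gt0) -sum_r sumr_ge0.
have [tau0|tau_neq0] := eqVneq tau 0.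
- have r0 n : r n = 0.
    apply: (@psumr_eq0P _ _ predT r (fun i _ => r_ge0 i)) => //.
    by rewrite sum_r tau0 mulr0.
  exists 0, (fun _ => 0), (fun _ => 0); split; first split=> //.
  + rewrite d_eq !big1 // => n _; first by rewrite /rateB eqxx.
    by rewrite rateC_capacity r0 capacity0.
  + by rewrite -time_tau tau0.
  + by rewrite big1 // ltW.
  + by rewrite lerD2r ler_energy // => n; rewrite mul0r.
- exists tau, (fun n => E n / tau), (fun n => r n / tau).
  split; first split=> //.
  + rewrite d_eq; apply: ler_sum => n _.
    by rewrite rateB_capacity rateC_capacity !divfK.
  + by rewrite time_tau.
  + by rewrite -mulr_suml sum_r mulfK.
  + by split=> // n; split; apply: divr_ge0.
  + by rewrite lerD2r ler_energy // => n; rewrite divfK.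
Qed.

End Problems.

Theorem lemma6 (R : realType) (N : nat) (h g : 'I_N -> R)
    (W sigma kappa L D T fB : R)
    (HN : (0 < N)%N) (Hh : forall n, 0 < h n) (Hg : forall n, 0 < g n)
    (HW : 0 < W) (Hsigma : 0 < sigma) (Hkappa : 0 < kappa) (HL : 0 < L)
    (HD : 0 < D) (HT : 0 < T) (HfB : 0 < fB) :
  (* A -> C : every feasible point of A is matched by a point of C no worse *)
  (forall d t E, feasA h W sigma L D T fB d t E ->
     exists d' r E', feasC h W sigma L D T fB d' r E' /\
       objC h g kappa L D T d' r E' <= objA h g kappa L D T d t E) /\
  (* C -> A *)
  (forall d r E, feasC h W sigma L D T fB d r E ->
     exists d' t E', feasA h W sigma L D T fB d' t E' /\
       objA h g kappa L D T d' t E' <= objC h g kappa L D T d r E) /\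
  (* B -> C *)
  (forall d t P w, feasB h W sigma L D T fB d t P w ->
     exists d' r E', feasC h W sigma L D T fB d' r E' /\
       objC h g kappa L D T d' r E' <= objB h g kappa L D T d t P w) /\
  (* C -> B *)
  (forall d r E, feasC h W sigma L D T fB d r E ->
     exists d' t P w, feasB h W sigma L D T fB d' t P w /\
       objB h g kappa L D T d' t P w <= objC h g kappa L D T d r E).
Proof.
pose i0 : 'I_N := Ordinal HN.
split; [|split; [|split]].
- by move=> d t E /(feasC_of_feasA kappa Hh Hg HW Hsigma i0); exists d.
- move=> d r E /(feasA_of_feasC HW Hsigma) feasA.
  by exists d, (fun n => r n / W), E.
- by move=> d t P w /(feasC_of_feasB kappa Hh Hg HW Hsigma i0); exists d.
- by move=> d r E /(feasB_of_feasC kappa Hh Hg HW Hsigma); exists d.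
Qed.
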